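(* Under the hypotheses and notation of the following setting: $\mathcal{M}$ is a reversible, ergodic Markov chain on finite $\Omega$, $N=|\Omega|$, transition matrix $P$, stationary distribution $\pi$, eigenvalues $1=\lambda_0>\lambda_1\geq\cdots\geq\lambda_{N-1}\geq-1$, underlying graph $\mathcal{G}=(\Omega,\Gamma)$ with $\{x,y\}\in\Gamma$ iff $P(x,y)>0$, $Q(x,y)=\pi(x)P(x,y)$, and $\Sigma=\{\sigma_x:x\in\Omega\}$ a choice of cycles $\sigma_x$ in $\mathcal{G}$ from $x$ to $x$ of odd length $|\sigma_x|$. Define \[ \eta'(\Sigma)=\max_{e\in\Gamma}\frac{1}{Q(e)}\sum_{x\in\Omega:\,e\in\sigma_x}\pi(x),\qquad \ell(\Sigma)=\max_{x\in\Omega}|\sigma_x|. \] Then $(1+\lambda_{N-1})^{-1}\leq \eta'(\Sigma)\,\ell(\Sigma)/2$. In particular, if $\ell(\Sigma)=1$ (so every $\sigma_x$ is a self-loop, i.e. $P(x,x)>0$ for all $x$), then $(1+\lambda_{N-1})^{-1}\leq \tfrac12\max_{x\in\Omega}P(x,x)^{-1}$.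
   Context: A 1-cycle is a walk along a self-loop edge $\{x,x\}$, present when $P(x,x)>0$. *)

From HB Require Import structures.
From mathcomp Require Import all_boot all_order all_algebra.
Set Implicit Arguments. Unset Strict Implicit. Unset Printing Implicit Defensive.
Import Order.TTheory GRing.Theory Num.Theory.
Local Open Scope ring_scope.

Section Chain.
Variables (R : rcfType) (N : nat).
Implicit Types (P : 'M[R]_N) (pi : 'I_N -> R).

Definition stochastic P : Prop :=
  (forall x y, 0 <= P x y) /\ (forall x, \sum_y P x y = 1).

Definition adj P : rel 'I_N := fun x y => 0 < P x y.

Definition irreducible P : Prop := forall x y, connect (adj P) x y.

Definition aperiodic P : Prop :=
  forall (x : 'I_N) (d : nat),
    (forall t : nat, (0 < t)%N -> 0 < (P ^+ t) x x -> (d %| t)%N) -> d = 1%N.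

Definition ergodic P : Prop := irreducible P /\ aperiodic P.

Definition stationary P pi : Prop :=
  (forall x, 0 <= pi x) /\ (\sum_x pi x = 1) /\
  (forall y, \sum_x pi x * P x y = pi y).

Definition reversible P pi : Prop :=
  forall x y, pi x * P x y = pi y * P y x.

Definition Qe P pi (e : 'I_N * 'I_N) : R := pi e.1 * P e.1 e.2.

(* a walk sigma_x is given by its start x and the list s of subsequent
   vertices; its length |sigma_x| is size s. It is a cycle from x to x
   in G of odd length. *)
Definition odd_cycle_at P (x : 'I_N) (s : seq 'I_N) : bool :=
  [&& path (adj P) x s, last x s == x & odd (size s)].

Definition edge_in_walk (x : 'I_N) (s : seq 'I_N) (e : 'I_N * 'I_N) : bool :=
  has (fun p => (p == e) || (p == (e.2, e.1))) (zip (x :: s) s).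

Definition eta' P pi (sigma : 'I_N -> seq 'I_N) : R :=
  \big[Num.max/0]_(e : 'I_N * 'I_N | 0 < P e.1 e.2)
     ((Qe P pi e)^-1 * \sum_(x | edge_in_walk x (sigma x) e) pi x).

Definition ell (sigma : 'I_N -> seq 'I_N) : nat := (\max_(x : 'I_N) size (sigma x))%N.

End Chain.

From HB Require Import structures.
From mathcomp Require Import all_boot all_order all_algebra.
From mathcomp Require Import ring lra zify.
Import Order.TTheory GRing.Theory Num.Theory.
Set Implicit Arguments. Unset Strict Implicit. Unset Printing Implicit Defensive.

(* Let v be a left eigenvector of P for lambda and f = v / pi.  By reversibility
   f is a right eigenfunction, hence
     sum_(x,y) Q(x,y) (f x + f y)^2 = 2 (1 + lambda) ||f||^2_pi.          (1)
   Along an odd closed walk sigma_x from x, 2 f(x) is the alternating sum of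
   f(a) + f(b) over its steps (a, b), so by Cauchy-Schwarz
     4 f(x)^2 <= |sigma_x| * sum over the steps (a, b) of (f a + f b)^2.
   Since eta' counts each edge of sigma_x once, we first cut out closed subwalks
   of even length: afterwards every return takes an odd number of steps, so
   orienting each step from its vertex at an even position is injective, and
   the sum over steps is bounded by the sum over traversed edges.  Weighting by
   pi(x), exchanging the sums and bounding the mass through each edge e by
   eta' Q(e) gives 4 ||f||^2_pi <= ell eta' times (1), i.e.
   2 <= ell eta' (1 + lambda).  With sigma_x the self-loop at x, eta' is at
   most max_x 1 / P(x, x) and ell = 1. *)

Section Walks.
Variable T : eqType.
Implicit Types (e : rel T) (x : T) (s : seq T).

Definition vtx x s k : T := nth x (x :: s) k.

Definition step x s k : T * T := (vtx x s k, vtx x s k.+1).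

Definition odd_returns x s : Prop :=
  forall i j, i < j <= size s -> vtx x s i = vtx x s j -> odd (j - i).

Definition odd_closed_walk e x s : bool :=
  [&& path e x s, last x s == x & odd (size s)].

Definition steps_within x s' s : Prop :=
  forall k, k < size s' -> exists2 k', k' < size s & step x s' k = step x s k'.

Lemma last_vtx x s : last x s = vtx x s (size s).
Proof. exact: last_nth. Qed.

Lemma path_step e x s k : path e x s -> k < size s -> e (vtx x s k) (vtx x s k.+1).
Proof. by move/(pathP x); apply. Qed.

Lemma steps_within_trans x s1 s2 s3 :
  steps_within x s1 s2 -> steps_within x s2 s3 -> steps_within x s1 s3.
Proof.
by move=> h12 h23 k /h12 [k' /h23 [k'' lt_k'' step_k'] ->]; exists k''.
Qed.

Lemma vtx_cut x s i j k : i <= size s -> i <= j ->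
  vtx x (take i s ++ drop j s) k =
  if k <= i then vtx x s k else vtx x s (k + (j - i)).
Proof.
move=> le_i_s le_i_j; case: k => [|k] //=.
rewrite /vtx /= nth_cat size_takel //; case: ifPn => [lt_k_i|].
  by rewrite nth_take // ltnW.
by rewrite -leqNgt nth_drop => le_i_k; congr nth; lia.
Qed.

Lemma cut_even_return e x s i j :
  odd_closed_walk e x s ->
  i < j <= size s -> vtx x s i = vtx x s j -> ~~ odd (j - i) ->
  exists2 s1, size s1 < size s & odd_closed_walk e x s1 /\ steps_within x s1 s.
Proof.
rewrite /odd_closed_walk last_vtx => /and3P [walk_s /eqP closed_s odd_s].
move=> /andP [lt_ij le_j] vtx_ij even_ji.
have le_i : i <= size s by lia.
have le_ij : i <= j by lia.
set s1 := take i s ++ drop j s.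
have size_s1 : size s1 = size s - (j - i).
  by rewrite /s1 size_cat size_takel // size_drop; lia.
pose old k := if k < i then k else k + (j - i).
have step_s1 k : k < size s1 -> step x s1 k = step x s (old k) /\ old k < size s.
  rewrite size_s1 /old /step !vtx_cut // => lt_k; case: ltnP => [lt_ki|le_ik].
    by rewrite (ltnW lt_ki); split=> //; lia.
  rewrite addSn; case: (leqP k i) => [le_ki|_]; last by split=> //; lia.
  have -> : k = i by lia.
  by rewrite vtx_ij subnKC //; split=> //; lia.
exists s1; first by rewrite size_s1; lia.
split; last by move=> k /step_s1 [-> lt_old]; exists (old k).
rewrite /odd_closed_walk (last_vtx x s1); apply/and3P; split.
- apply/(pathP x) => k lt_k; change (e (vtx x s1 k) (vtx x s1 k.+1)).
  by have [[-> ->] lt_old] := step_s1 k lt_k; exact: path_step.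
- apply/eqP; rewrite vtx_cut // size_s1; case: ifP => [le_si|_]; last by rewrite subnK //; lia.
  have -> : size s - (j - i) = i by lia.
  by rewrite vtx_ij (_ : j = size s) //; lia.
- by rewrite size_s1 oddB ?odd_s ?(negbTE even_ji) //; lia.
Qed.

Lemma odd_returns_reduction e x s :
  odd_closed_walk e x s ->
  exists s', [/\ odd_closed_walk e x s', size s' <= size s,
                 steps_within x s' s & odd_returns x s'].
Proof.
have [n] := ubnP (size s); elim: n s => // n IH s /ltnSE le_s_n walk_s.
pose even_return := [exists i : 'I_(size s).+1, [exists j : 'I_(size s).+1,
  [&& i < j, vtx x s i == vtx x s j & ~~ odd (j - i)]]].
have [/existsP [i /existsP [j /and3P [lt_ij /eqP vtx_ij even_ji]]]|no_even] := boolP even_return.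
  have [|s1 lt_s1 [walk_s1 within_s1]] := cut_even_return walk_s _ vtx_ij even_ji.
    by rewrite lt_ij -ltnS ltn_ord.
  have [|s' [walk' le_s' within' returns']] := IH s1 _ walk_s1.
    exact: leq_trans lt_s1 le_s_n.
  exists s'; split=> //; first exact: leq_trans le_s' (ltnW lt_s1).
  exact: steps_within_trans within' within_s1.
exists s; split=> //; first by move=> k lt_k; exists k.
move=> i j /andP [lt_ij le_j] vtx_ij; apply: contraNT no_even => even_ji.
have lt_i : i < (size s).+1 by lia.
apply/existsP; exists (Ordinal lt_i); apply/existsP; exists (Ordinal (le_j : j < (size s).+1)).
by rewrite /= lt_ij vtx_ij eqxx.
Qed.

(* The k-th step oriented so that its first vertex sits at an even position. *)
Definition even_step x s k : T * T := (vtx x s (k + odd k), vtx x s (k + ~~ odd k)).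

Lemma even_step_orient x s k :
  even_step x s k = step x s k \/ even_step x s k = (vtx x s k.+1, vtx x s k).
Proof. by rewrite /even_step /step; case: (odd k); [right | left]; rewrite ?addn0 ?addn1. Qed.

Lemma odd_returns_same_parity x s i j :
  odd_returns x s -> i <= size s -> j <= size s ->
  vtx x s i = vtx x s j -> odd i = odd j -> i = j.
Proof.
move=> returns le_i le_j vtx_ij odd_ij.
wlog lt_ij : i j le_i le_j vtx_ij odd_ij / i < j.
  by move=> W; case: (ltngtP i j) => // [lt_ij|lt_ji]; [exact: W | exact/esym/W].
have := returns i j; rewrite lt_ij le_j oddB ?(ltnW lt_ij) // odd_ij addbb.
by move/(_ isT vtx_ij).
Qed.

(* Hence distinct steps of such a walk have distinct even orientations: an edge
   {a, b} is traversed at most twice, once from each endpoint taken at an even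
   position, and a loop at most once. *)
Lemma even_step_inj x s : odd_returns x s ->
  {in [pred k | k < size s] &, injective (even_step x s)}.
Proof.
move=> returns k1 k2 lt_k1 lt_k2 [vtx_even vtx_odd].
have pos_le k : k < size s -> (k + odd k <= size s) && (k + ~~ odd k <= size s).
  by case: (odd k) => /=; lia.
have /andP [le_e1 le_o1] := pos_le k1 lt_k1; have /andP [le_e2 le_o2] := pos_le k2 lt_k2.
have even_pos := odd_returns_same_parity returns le_e1 le_e2 vtx_even.
have odd_pos := odd_returns_same_parity returns le_o1 le_o2 vtx_odd.
rewrite !oddD !oddb !addbN !addbb /= in even_pos odd_pos.
move: (even_pos erefl) (odd_pos erefl).
by case: (odd k1) (odd k2) => [] [] /=; lia.
Qed.
End Walks.

Lemma edge_in_walkP (N : nat) (x : 'I_N) (s : seq 'I_N) (p : 'I_N * 'I_N) :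
  reflect (exists2 k, k < size s & (step x s k == p) || (step x s k == (p.2, p.1)))
          (edge_in_walk x s p).
Proof.
have size_steps : size (zip (x :: s) s) = size s.
  by rewrite size_zip /= (minn_idPr (leqnSn _)).
apply: (iffP (has_nthP (x, x))) => [] [k lt_k step_k]; exists k;
  rewrite ?size_steps // in lt_k *; by rewrite nth_zip_cond size_steps lt_k in step_k *.
Qed.


Local Open Scope ring_scope.

Lemma sum_ge0_subset (R : numDomainType) (I : finType) (A B : pred I) (F : I -> R) :
  (forall i, 0 <= F i) -> (forall i, A i -> B i) -> \sum_(i | A i) F i <= \sum_(i | B i) F i.
Proof.
move=> F_ge0 sAB; rewrite [leLHS]big_mkcond [leRHS]big_mkcond /=.
apply: ler_sum => i _; case: ifP => [/sAB -> //|_]; by case: ifP.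
Qed.

Lemma edge_in_walk_within (N : nat) (x : 'I_N) (s' s : seq 'I_N) (p : 'I_N * 'I_N) :
  steps_within x s' s -> edge_in_walk x s' p -> edge_in_walk x s p.
Proof.
move=> within /edge_in_walkP [k /within [k' lt_k' ->] step_k].
by apply/edge_in_walkP; exists k'.
Qed.

Lemma sum_steps_le_edges (R : numDomainType) (N : nat) (x : 'I_N) (s : seq 'I_N)
    (h : 'I_N * 'I_N -> R) :
  odd_returns x s -> (forall p, 0 <= h p) -> (forall a b, h (a, b) = h (b, a)) ->
  \sum_(k < size s) h (step x s k) <= \sum_(p | edge_in_walk x s p) h p.
Proof.
move=> returns h_ge0 h_sym.
have inj : injective (fun k : 'I_(size s) => even_step x s k).
  by move=> k1 k2 /(even_step_inj returns (ltn_ord k1) (ltn_ord k2)) /val_inj.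
have -> : \sum_(k < size s) h (step x s k) =
          \sum_(p in [set even_step x s k | k : 'I_(size s)]) h p.
  rewrite (big_imset _ (in2W inj)) /=; apply: eq_bigr => k _.
  by case: (even_step_orient x s k) => ->; rewrite // h_sym.
apply: sum_ge0_subset => // _ /imsetP [k _ ->].
apply/edge_in_walkP; exists k => //.
by case: (even_step_orient x s k) => ->; rewrite eqxx ?orbT.
Qed.

(* Along an odd closed walk, 2 f(x) is the alternating sum of f(a) + f(b) over
   its steps (a, b): the sum telescopes and the odd length flips the last sign. *)
Lemma alternating_step_sum (R : comPzRingType) (T : eqType) (f : T -> R) (x : T) (s : seq T) :
  last x s = x -> odd (size s) ->
  \sum_(k < size s) (-1) ^+ k * (f (vtx x s k) + f (vtx x s k.+1)) = 2 * f x.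
Proof.
move=> closed_s odd_s; pose u k := - ((-1) ^+ k * f (vtx x s k)).
rewrite (eq_bigr (fun k : 'I_(size s) => u k.+1 - u k)); last first.
  by move=> k _; rewrite /u exprS; ring.
rewrite -(big_mkord xpredT (fun k => u k.+1 - u k)) telescope_sumr // /u -last_vtx closed_s.
by rewrite -signr_odd odd_s /= expr0 expr1; ring.
Qed.

Lemma sqr_sum_le (R : realDomainType) (n : nat) (u : nat -> R) :
  (\sum_(k < n) u k) ^+ 2 <= n%:R * \sum_(k < n) u k ^+ 2.
Proof.
elim: n => [|n IH]; first by rewrite !big_ord0 expr0n /= mul0r.
rewrite !big_ord_recr /= -natr1.
move: IH; set S := \sum_(k < n) u k; set Q := \sum_(k < n) u k ^+ 2; set a := u n => IH.
have Q_ge0 : 0 <= Q by apply: sumr_ge0 => k _; exact: sqr_ge0.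
have [n0|n_gt0] := eqVneq (n%:R : R) 0.
  move: IH; rewrite n0 mul0r => S2_le0.
  have -> : S = 0 by apply/eqP; rewrite -sqrf_eq0 eq_le S2_le0 sqr_ge0.
  nra.
have {}n_gt0 : 0 < (n%:R : R) by rewrite lt_neqAle eq_sym n_gt0 ler0n.
have cross : 2 * S * a <= Q + n%:R * a ^+ 2.
  rewrite -(ler_pM2l n_gt0); have := sqr_ge0 (S - n%:R * a); nra.
nra.
Qed.

Lemma odd_closed_walk_bound (R : realDomainType) (N : nat) (e : rel 'I_N) (f : 'I_N -> R)
    (x : 'I_N) (s : seq 'I_N) :
  odd_closed_walk e x s ->
  4 * f x ^+ 2 <= (size s)%:R * \sum_(p | edge_in_walk x s p) (f p.1 + f p.2) ^+ 2.
Proof.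
move=> walk_s.
have [s' [walk_s' le_s' within' returns']] := odd_returns_reduction walk_s.
have /and3P [_ /eqP closed' odd'] := walk_s'.
pose g (p : 'I_N * 'I_N) := (f p.1 + f p.2) ^+ 2.
have g_ge0 p : 0 <= g p by exact: sqr_ge0.
have g_sym a b : g (a, b) = g (b, a) by rewrite /g addrC.
rewrite (_ : 4 * _ = (2 * f x) ^+ 2); last by ring.
rewrite -(alternating_step_sum f closed' odd').
apply: le_trans
  (sqr_sum_le (size s') (fun k => (-1) ^+ k * (f (vtx x s' k) + f (vtx x s' k.+1)))) _.
under eq_bigr => k _ do rewrite exprMn sqrr_sign mul1r.
apply: ler_pM; [exact: ler0n | by apply: sumr_ge0 => k _; exact: sqr_ge0 | by rewrite ler_nat |].
apply: le_trans (sum_steps_le_edges returns' g_ge0 g_sym) _.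
by apply: sum_ge0_subset => // p; exact: edge_in_walk_within.
Qed.

Section ReversibleChain.
Variables (R : rcfType) (N : nat) (P : 'M[R]_N) (pi : 'I_N -> R).
Hypotheses (P_stoch : stochastic P) (P_irr : irreducible P)
           (pi_stat : stationary P pi) (P_rev : reversible P pi).

(* The stationary distribution of an irreducible chain charges every state:
   positivity spreads along edges, since pi(w) >= pi(z) P(z, w). *)
Lemma pi_gt0 y : 0 < pi y.
Proof.
have [pi_ge0 [pi_sum1 pi_inv]] := pi_stat.
have [z pi_z] : exists z, 0 < pi z.
  case: (pickP (fun z => 0 < pi z)) => [z pi_z|pi_le0]; first by exists z.
  have : \sum_x pi x <= 0 by apply: sumr_le0 => x _; rewrite leNgt pi_le0.
  by rewrite pi_sum1 ler10.
have step_gt0 u w : 0 < pi u -> adj P u w -> 0 < pi w.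
  move=> pi_u P_uw; rewrite -pi_inv (bigD1 u) //=.
  apply: lt_le_trans (mulr_gt0 pi_u P_uw) _; rewrite lerDl.
  by apply: sumr_ge0 => t _; rewrite mulr_ge0 ?pi_ge0 //; exact: P_stoch.1.
have /connectP [q walk_q ->] := P_irr z y.
elim: q z pi_z walk_q => //= w q IH z pi_z /andP [P_zw walk_q].
exact: IH (step_gt0 _ _ pi_z P_zw) walk_q.
Qed.

Lemma P_gt0_sym a b : 0 < P b a -> 0 < P a b.
Proof. by move=> P_ba; rewrite -(pmulr_rgt0 _ (pi_gt0 a)) P_rev mulr_gt0 ?pi_gt0. Qed.

Lemma edge_in_walk_gt0 x s p : path (adj P) x s -> edge_in_walk x s p -> 0 < P p.1 p.2.
Proof.
move=> walk_s /edge_in_walkP [k lt_k]; have := path_step walk_s lt_k.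
rewrite /adj /step; case: p => a b /= P_k /orP [] /eqP [<- <-] //.
exact: P_gt0_sym.
Qed.

Lemma right_eigenfunction lambda (v : 'rV[R]_N) :
  v *m P = lambda *: v -> forall x, \sum_y P x y * (v 0 y / pi y) = lambda * (v 0 x / pi x).
Proof.
move=> eigen_v x; rewrite mulrA.
have := congr1 (fun w : 'rV[R]_N => w 0 x) eigen_v; rewrite !mxE => <-.
rewrite mulr_suml; apply: eq_bigr => y _.
have pi_neq0 z : pi z != 0 by rewrite gt_eqF ?pi_gt0.
rewrite (_ : P x y = (pi x)^-1 * (pi y * P y x)); last by rewrite -P_rev mulKf.
by field; rewrite !pi_neq0.
Qed.

Lemma edge_form_eigen lambda (f : 'I_N -> R) :
  (forall x, \sum_y P x y * f y = lambda * f x) ->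
  \sum_x \sum_y pi x * P x y * (f x + f y) ^+ 2 = 2 * (1 + lambda) * \sum_x pi x * f x ^+ 2.
Proof.
move=> f_eigen; have [_ [_ pi_inv]] := pi_stat.
have rows : \sum_x \sum_y pi x * f x ^+ 2 * P x y = \sum_x pi x * f x ^+ 2.
  by apply: eq_bigr => x _; rewrite -mulr_sumr P_stoch.2 mulr1.
have cols : \sum_x \sum_y pi x * P x y * f y ^+ 2 = \sum_x pi x * f x ^+ 2.
  by rewrite exchange_big; apply: eq_bigr => y _; rewrite -mulr_suml pi_inv.
have cross : \sum_x \sum_y 2 * (pi x * f x) * (P x y * f y) =
             2 * lambda * \sum_x pi x * f x ^+ 2.
  by rewrite mulr_sumr; apply: eq_bigr => x _; rewrite -mulr_sumr f_eigen; ring.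
rewrite (eq_bigr (fun x => \sum_y pi x * f x ^+ 2 * P x y + \sum_y pi x * P x y * f y ^+ 2
                           + \sum_y 2 * (pi x * f x) * (P x y * f y))); last first.
  by move=> x _; rewrite -!big_split; apply: eq_bigr => y _ /=; ring.
by rewrite !big_split rows cols cross /=; ring.
Qed.

Lemma congestion_le (sigma : 'I_N -> seq 'I_N) :
  (forall x, path (adj P) x (sigma x)) ->
  forall p, \sum_(x | edge_in_walk x (sigma x) p) pi x <= eta' P pi sigma * Qe P pi p.
Proof.
move=> walk_sigma p; have [P_p|P_p] := ltP 0 (P p.1 p.2).
  have Q_p : 0 < Qe P pi p by rewrite mulr_gt0 ?pi_gt0.
  by rewrite -ler_pdivrMr // mulrC; apply: le_bigmax_cond.
rewrite big_pred0; last first.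
  by move=> x; apply/negP => /(edge_in_walk_gt0 (walk_sigma x)); rewrite ltNge P_p.
rewrite mulr_ge0 ?bigmax_ge_id // mulr_ge0 ?(ltW (pi_gt0 _)) //; exact: P_stoch.1.
Qed.

Lemma odd_cycle_inequality (sigma : 'I_N -> seq 'I_N) (f : 'I_N -> R) :
  (forall x, odd_cycle_at P x (sigma x)) ->
  4 * \sum_x pi x * f x ^+ 2 <=
    (ell sigma)%:R * eta' P pi sigma * \sum_x \sum_y pi x * P x y * (f x + f y) ^+ 2.
Proof.
move=> odd_sigma; pose g (p : 'I_N * 'I_N) := (f p.1 + f p.2) ^+ 2.
have walk_sigma x : path (adj P) x (sigma x) by have /and3P [] := odd_sigma x.
have pointwise x : 4 * f x ^+ 2 <= (ell sigma)%:R * \sum_(p | edge_in_walk x (sigma x) p) g p.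
  apply: le_trans (odd_closed_walk_bound f (odd_sigma x)) _.
  apply: ler_wpM2r; first by apply: sumr_ge0 => p _; exact: sqr_ge0.
  by rewrite ler_nat /ell (leq_bigmax x).
have swap : \sum_x pi x * \sum_(p | edge_in_walk x (sigma x) p) g p =
            \sum_p (\sum_(x | edge_in_walk x (sigma x) p) pi x) * g p.
  under eq_bigr do rewrite mulr_sumr.
  by rewrite (exchange_big_dep xpredT) //=; apply: eq_bigr => p _; rewrite mulr_suml.
rewrite mulr_sumr.
apply: (@le_trans _ _ (\sum_x pi x * ((ell sigma)%:R *
                        \sum_(p | edge_in_walk x (sigma x) p) g p))).
  apply: ler_sum => x _; rewrite mulrCA.
  by apply: ler_wpM2l; [exact: ltW (pi_gt0 x) | exact: pointwise].
under eq_bigr do rewrite mulrCA.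
rewrite -mulr_sumr swap -mulrA pair_bigA /=; apply: ler_wpM2l => //.
rewrite mulr_sumr; apply: ler_sum => p _.
rewrite mulrA; apply: ler_wpM2r; first exact: sqr_ge0.
exact: congestion_le.
Qed.

Lemma smallest_eigenvalue_bound (sigma : 'I_N -> seq 'I_N) (lambda : R) :
  (forall x, odd_cycle_at P x (sigma x)) -> eigenvalue P lambda ->
  0 < 1 + lambda /\ (1 + lambda)^-1 <= eta' P pi sigma * (ell sigma)%:R / 2.
Proof.
move=> odd_sigma /eigenvalueP [v eigen_v v_neq0].
pose f y := v 0 y / pi y.
have [x0 v_x0] : exists x0, v 0 x0 != 0.
  apply/existsP; apply: contraNT v_neq0 => /existsPn v_eq0.
  by apply/eqP/matrixP => i x; rewrite mxE (ord1 i); apply/eqP/negPn/v_eq0.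
have norm_gt0 : 0 < \sum_x pi x * f x ^+ 2.
  have f_x0 : f x0 != 0 by rewrite mulf_eq0 negb_or v_x0 invr_eq0 gt_eqF ?pi_gt0.
  rewrite (bigD1 x0) //= ltr_pwDl //.
    by rewrite mulr_gt0 ?pi_gt0 // lt_neqAle sqr_ge0 eq_sym sqrf_eq0 f_x0.
  by apply: sumr_ge0 => x _; rewrite mulr_ge0 ?sqr_ge0 ?ltW ?pi_gt0.
have := odd_cycle_inequality f odd_sigma.
rewrite (edge_form_eigen (right_eigenfunction eigen_v)).
set c := (ell sigma)%:R * eta' P pi sigma; set S := \sum_x _ => ineq.
have c_ge0 : 0 <= c by rewrite mulr_ge0 ?ler0n ?bigmax_ge_id.
have two_le : 2 <= c * (1 + lambda).
  have twoS_gt0 : 0 < 2 * S by rewrite mulr_gt0.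
  by rewrite -(ler_pM2r twoS_gt0); nra.
have lambda_gt : 0 < 1 + lambda.
  by rewrite ltNge; apply: contraTN two_le => le0; rewrite -ltNge; nra.
split=> //; rewrite -(ler_pM2r lambda_gt) mulVf ?gt_eqF //.
by rewrite mulrAC -[eta' _ _ _ * _]mulrC -/c ler_pdivlMr // mul1r.
Qed.

(* When every cycle is a self-loop, the edge {x, x} has congestion 1 / P(x, x)
   and the other edges carry nothing. *)
Lemma eta'_self_loops : eta' P pi (fun x => [:: x]) <= \big[Num.max/0]_(x : 'I_N) (P x x)^-1.
Proof.
apply: bigmax_le => [|[a b] _]; first exact: bigmax_ge_id.
have loop_edge x c d : edge_in_walk x [:: x] (c, d) = (x == c) && (x == d).
  by rewrite /edge_in_walk /= orbF !xpair_eqE andbC; case: eqP => // ->; rewrite orbb.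
case: (eqVneq a b) => [<-|a_neq_b].
  rewrite (big_pred1 a) => [|x]; last by rewrite loop_edge andbb.
  rewrite /Qe /= invfM mulrAC mulVf ?mul1r ?gt_eqF ?pi_gt0 //; exact: le_bigmax.
rewrite big_pred0 ?mulr0 ?bigmax_ge_id // => x; rewrite loop_edge.
by apply: contra_neqF a_neq_b => /andP [/eqP <- /eqP <-].
Qed.

Lemma self_loop_eigenvalue_bound :
  (forall x, 0 < P x x) -> forall lambda : R, eigenvalue P lambda ->
  (1 + lambda)^-1 <= 2^-1 * \big[Num.max/0]_(x : 'I_N) (P x x)^-1.
Proof.
move=> loops lambda ev_lambda.
have odd_loops x : odd_cycle_at P x [:: x] by rewrite /odd_cycle_at /= /adj loops eqxx.
have [_ /le_trans] := smallest_eigenvalue_bound odd_loops ev_lambda; apply.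
rewrite [leRHS]mulrC ler_wpM2r ?invr_ge0 ?ler0n //.
apply: le_trans eta'_self_loops; rewrite -[leRHS]mulr1 ler_wpM2l ?bigmax_ge_id //.
by rewrite lern1; apply/bigmax_leqP.
Qed.
End ReversibleChain.

Theorem mainTheorem3 (R : rcfType) (N : nat) (P : 'M[R]_N) (pi : 'I_N -> R) :
  stochastic P -> ergodic P -> stationary P pi -> reversible P pi ->
  (forall sigma : 'I_N -> seq 'I_N,
     (forall x, odd_cycle_at P x (sigma x)) ->
     forall lambda : R, eigenvalue P lambda ->
       0 < 1 + lambda /\
       (1 + lambda)^-1 <= eta' P pi sigma * (ell sigma)%:R / 2)
  /\
  ((forall x, 0 < P x x) ->
     forall lambda : R, eigenvalue P lambda ->
       (1 + lambda)^-1 <= 2^-1 * \big[Num.max/0]_(x : 'I_N) (P x x)^-1).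
Proof.
move=> P_stoch [P_irr _] pi_stat P_rev.
split=> [sigma odd_sigma lambda|].
- exact: smallest_eigenvalue_bound.
- exact: (self_loop_eigenvalue_bound P_stoch P_irr pi_stat P_rev).
Qed.
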